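(* For $m\ge 1$, let $\mathbf{D}_m=(d_{jk})$ be the $m\times m$ symmetric tridiagonal matrix with $d_{kk}=4k^2-6k+\tfrac52$ ($1\le k\le m$), $d_{k,k+1}=d_{k+1,k}=-k(2k-1)$ ($1\le k\le m-1$), and $d_{jk}=0$ if $|j-k|>1$. Then $\mathbf{D}_m$ is positive definite.
   Context: Equivalently, $\mathbf{D}_m=\mathbf{B}_m-\frac12\mathbf{E}_m$, where $\mathbf{E}_m$ is the $m\times m$ identity matrix and $\mathbf{B}_m$ is the symmetric tridiagonal matrix with diagonal entries $4k^2-6k+3$ and off-diagonal entries $-k(2k-1)$. *)

From mathcomp Require Import all_boot all_order all_algebra.
Set Implicit Arguments. Unset Strict Implicit. Unset Printing Implicit Defensive.
Import Order.TTheory GRing.Theory Num.Theory.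
Local Open Scope ring_scope.

(* The matrix D_m, indices 0-based: row/column i : 'I_m corresponds to k = i+1.
   d_kk = 4k^2 - 6k + 5/2, d_{k,k+1} = d_{k+1,k} = -k(2k-1), else 0. *)
Definition Dmat (R : fieldType) (m : nat) : 'M[R]_m :=
  \matrix_(i < m, j < m)
    let k := (i.+1)%:R : R in
    if i == j :> nat then 4 * k ^+ 2 - 6 * k + 5 / 2
    else if j == i.+1 :> nat then - (k * (2 * k - 1))
    else if i == j.+1 :> nat then
      let k' := (j.+1)%:R : R in - (k' * (2 * k' - 1))
    else 0.

Definition posdef (R : realFieldType) (m : nat) (A : 'M[R]_m) : Prop :=
  A^T = A /\ forall x : 'cV[R]_m, x != 0 -> 0 < (x^T *m A *m x) ord0 ord0.

From mathcomp Require Import all_boot all_order all_algebra.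
From mathcomp Require Import zify ring.
Import Order.TTheory GRing.Theory Num.Theory.
Local Open Scope ring_scope.

(* In the 0-based indexing of [Dmat], [2 * D_m = U^T U] where [U] is upper
   bidiagonal with [U i i = 2i + 1] and [U i (i+1) = -(2i + 2)]: the quadratic
   form of [D_m] is half the squared norm of [U x], and [U] is triangular with
   nonzero diagonal, hence invertible. *)

Section GramPosdef.
Variables (R : realFieldType) (n : nat).

Lemma trmx_mul_self_gt0 (y : 'cV[R]_n) : y != 0 -> 0 < (y^T *m y) ord0 ord0.
Proof.
move=> y_neq0; rewrite mxE.
under eq_bigr do rewrite mxE -expr2.
rewrite lt_def sumr_ge0 ?andbT; last by move=> i _; apply: sqr_ge0.
apply: contra y_neq0 => /eqP sum0; apply/eqP/matrixP => i j.
have /eqP := psumr_eq0P (fun k _ => sqr_ge0 (y k ord0)) sum0 (i := i) isT.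
by rewrite [j]ord1 mxE sqrf_eq0 => /eqP.
Qed.

Lemma posdef_scale_gram (c : R) (B : 'M[R]_n) :
  0 < c -> B \in unitmx -> posdef (c *: (B^T *m B)).
Proof.
move=> c_gt0 B_unit; split; first by rewrite linearZ /= trmx_mul trmxK.
move=> x x_neq0.
have -> : x^T *m (c *: (B^T *m B)) *m x = c *: ((B *m x)^T *m (B *m x)).
  by rewrite trmx_mul -scalemxAr -scalemxAl !mulmxA.
rewrite mxE mulr_gt0 // trmx_mul_self_gt0 //.
by apply: contra x_neq0 => /eqP Bx0; rewrite -(mulKmx B_unit x) Bx0 mulmx0.
Qed.

End GramPosdef.

Section Factorization.
Variable R : numFieldType.

Definition Dfactor_entry (i j : nat) : R :=
  if j == i then 2 * i%:R + 1 else if j == i.+1 then - (2 * i%:R + 2) else 0.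

Definition Dfactor (m : nat) : 'M[R]_m := \matrix_(i, j) Dfactor_entry i j.

Lemma Dfactor_entry_col (k i : nat) :
  Dfactor_entry k i = (k == i)%:R * (2 * i%:R + 1) - (k.+1 == i)%:R * (2 * i%:R).
Proof.
rewrite /Dfactor_entry eq_sym; case: eqP => [->|_]; first by rewrite gtn_eqF //=; ring.
by rewrite eq_sym; case: eqP => [<-|_] /=; ring.
Qed.

Lemma sum_indicator {m : nat} (c : 'I_m) (F : 'I_m -> R) :
  \sum_(k < m) (k == c :> nat)%:R * F k = F c.
Proof.
rewrite (bigD1 c) //= eqxx mul1r big1 ?addr0 // => k.
by rewrite val_eqE => /negbTE ->; rewrite mul0r.
Qed.

(* For [i = 0] the junk index [i.-1 = 0] is harmless: its coefficient is [2 * 0]. *)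
Lemma Dfactor_gram_entry (m : nat) (i j : 'I_m) :
  ((Dfactor m)^T *m Dfactor m) i j =
  (2 * i%:R + 1) * Dfactor_entry i j - 2 * i%:R * Dfactor_entry i.-1 j.
Proof.
rewrite mxE (eq_bigr (fun k : 'I_m =>
    (k == i :> nat)%:R * ((2 * i%:R + 1) * Dfactor_entry k j)
    - (k.+1 == i)%:R * (2 * i%:R * Dfactor_entry k j))); last first.
  by move=> k _; rewrite !mxE Dfactor_entry_col; ring.
rewrite sumrB; congr (_ - _).
  exact: (sum_indicator i (fun k => (2 * i%:R + 1) * Dfactor_entry k j)).
case: i => [[|i] lt_i_m] /=.
  by rewrite mulr0n mulr0 mul0r big1 // => k _; rewrite !mul0r.
under eq_bigr do rewrite eqSS.
exact: (sum_indicator (Ordinal (ltnW lt_i_m)) (fun k => _ * Dfactor_entry k j)).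
Qed.

Lemma Dmat_gram (m : nat) : Dmat R m = 2^-1 *: ((Dfactor m)^T *m Dfactor m).
Proof.
apply/matrixP => i j; rewrite [LHS]mxE [RHS]mxE Dfactor_gram_entry /Dfactor_entry.
case: i j => [i _] [j _] /=.
by case: i => [|i] /=; repeat case: eqP => ? //; subst; try lia; field.
Qed.

Lemma Dfactor_unitmx (m : nat) : Dfactor m \in unitmx.
Proof.
have trig : is_trig_mx (Dfactor m)^T.
  apply/is_trig_mxP => i j lt_ij; rewrite !mxE /Dfactor_entry.
  by rewrite ltn_eqF // ltn_eqF // ltnS ltnW.
rewrite unitmxE -det_tr det_trig // unitfE; apply/prodf_neq0 => i _.
by rewrite !mxE /Dfactor_entry eqxx gt_eqF // ltr_wpDl ?mulr_ge0.
Qed.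

End Factorization.

Theorem proposition4p1 (R : realFieldType) (m : nat) (hm : (1 <= m)%N) :
  posdef (Dmat R m).
Proof.
rewrite Dmat_gram; apply: posdef_scale_gram; last exact: Dfactor_unitmx.
by rewrite invr_gt0 ltr0n.
Qed.
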